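(* Let $G$ be a finite simple graph with vertices $v_1,\dots,v_n$ ($n\ge 1$) in which no vertex is adjacent to all other vertices, let $d\ge 1$ be an integer, let $G'$ be the graph constructed from $(G,d)$ as described in the context, and let $h=n(n+1)+d$. Suppose $S_1,\dots,S_h$ are pairwise disjoint vertex sets of $G'$, each inducing a connected subgraph, such that for all $i\ne j$ some edge of $G'$ joins a vertex of $S_i$ to a vertex of $S_j$. Then for each $p\in\{1,\dots,n\}$ there exists $q\in\{1,\dots,n+1\}$ such that the single-vertex set $\{b_{p,q}\}$ is one of the sets $S_1,\dots,S_h$.
   Context: Construction of $G'$ from a graph $G$ with vertices $v_1,\dots,v_n$ and an integer $d$: say $v_i$ dominates $v_j$ if $v_i=v_j$ or $v_iv_j$ is an edge of $G$. The vertex set of $G'$ consists of top vertices $t_1,\dots,t_d$, middle vertices $m_1,\dots,m_n$, and bottom vertices $b_{j,k}$ for $1\le j\le n$, $1\le k\le n+1$. Edges: the top vertices form a clique; the middle vertices form an independent set; the bottom vertices form a clique (of size $n(n+1)$); every top vertex is adjacent to every middle vertex; there are no top–bottom edges; middle vertex $m_i$ is adjacent to bottom vertex $b_{j,k}$ if and only if $v_i$ dominates $v_j$ in $G$. *)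

From HB Require Import structures.
From mathcomp Require Import all_boot.
Set Implicit Arguments. Unset Strict Implicit. Unset Printing Implicit Defensive.

(* Vertex type of G': top t_1..t_d, middle m_1..m_n, bottom b_{j,k} (j<n, k<n+1).
   Indices are 0-based ordinals. *)
Inductive gvert (n d : nat) :=
  | Top of 'I_d
  | Mid of 'I_n
  | Bot of 'I_n & 'I_n.+1.

Definition gvert_enc n d (v : gvert n d) : ('I_d + 'I_n) + ('I_n * 'I_n.+1) :=
  match v with Top t => inl (inl t) | Mid m => inl (inr m) | Bot j k => inr (j, k) end.
Definition gvert_dec n d (x : ('I_d + 'I_n) + ('I_n * 'I_n.+1)) : gvert n d :=
  match x with inl (inl t) => @Top n d t | inl (inr m) => @Mid n d m
             | inr (j, k) => @Bot n d j k end.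
Lemma gvert_encK n d : cancel (@gvert_enc n d) (@gvert_dec n d).
Proof. by case. Qed.
HB.instance Definition _ n d := Finite.copy (gvert n d) (can_type (@gvert_encK n d)).

Definition dominates n (e : rel 'I_n) (i j : 'I_n) : bool := (i == j) || e i j.

Definition Gprime_adj n d (e : rel 'I_n) (x y : gvert n d) : bool :=
  match x, y with
  | Top t, Top t' => t != t'
  | Top _, Mid _ | Mid _, Top _ => true
  | Mid _, Mid _ => false
  | Bot j k, Bot j' k' => (j, k) != (j', k')
  | Top _, Bot _ _ | Bot _ _, Top _ => false
  | Mid i, Bot j _ | Bot j _, Mid i => dominates e i j
  end.

Definition induces_connected (T : finType) (r : rel T) (S : {set T}) : Prop :=
  S != set0 /\
  forall x y, x \in S -> y \in S ->
    connect [rel u v | [&& r u v, u \in S & v \in S]] x y.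

Definition simple_graph (T : finType) (r : rel T) : Prop :=
  symmetric r /\ irreflexive r.

From mathcomp Require Import all_boot zify.
Set Implicit Arguments. Unset Strict Implicit. Unset Printing Implicit Defensive.

(* Weigh a vertex set A by #|A ∩ row p| + 2 #|A ∩ (bottom \ row p)| + #|A ∩ mids|
   + #|A ∩ tops| + [A ⊆ mids].  Each S_i weighs at least 2 unless it is a singleton
   {b_{p,q}}: a set without middle vertices cannot contain a top vertex (it would then
   consist of top vertices only, forcing every S_j to meet the n + d top and middle
   vertices), so it lies in the bottom clique and weighs 2 unless it is a single
   vertex of row p; a set with a middle vertex gains its second unit from a top vertex,
   a bottom vertex, or from lying in the independent set of middle vertices, which at
   most one S_i can do.  By disjointness the total weight is at most
   (n+1) + 2(n(n+1) - (n+1)) + n + d + 1 = 2n(n+1) + d < 2h, since d > 0. *)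

Lemma sum_card_setI_disjoint (T I : finType) (S : I -> {set T}) (A : {set T}) :
  (forall i j, i != j -> [disjoint S i & S j]) -> \sum_i #|S i :&: A| <= #|A|.
Proof.
move=> disjS.
have disjSA i j : i != j -> [disjoint S i :&: A & S j :&: A].
  move/disjS; rewrite -!setI_eq0 => /eqP Sij0.
  by rewrite setIACA setIid Sij0 set0I.
under eq_bigr do rewrite -sum1_card.
rewrite -(partition_disjoint_bigcup _ _ disjSA) sum1_card.
by apply/subset_leq_card/bigcupsP => i _; apply: subsetIr.
Qed.

Lemma card_sub_imset (aT rT : finType) (f : aT -> rT) (A : {set rT}) :
  A \subset f @: setT -> #|A| <= #|aT|.
Proof. by move/subset_leq_card/leq_trans; apply; rewrite -cardsT leq_imset_card. Qed.

Section Parts.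

Variables n d : nat.

Definition tops : {set gvert n d} := [set x | if x is Top _ then true else false].
Definition mids : {set gvert n d} := [set x | if x is Mid _ then true else false].
Definition bottom : {set gvert n d} := [set x | if x is Bot _ _ then true else false].
Definition row (p : 'I_n) : {set gvert n d} :=
  [set x | if x is Bot j _ then j == p else false].
Definition offrow p := bottom :\: row p.

Lemma card_tops : #|tops| <= d.
Proof.
have tops_sub : tops \subset @Top n d @: setT.
  by apply/subsetP => x; rewrite inE; case: x => // t _; rewrite imset_f.
by have := card_sub_imset tops_sub; rewrite card_ord.
Qed.

Lemma card_mids : #|mids| <= n.
Proof.
have mids_sub : mids \subset @Mid n d @: setT.
  by apply/subsetP => x; rewrite inE; case: x => // i _; rewrite imset_f.
by have := card_sub_imset mids_sub; rewrite card_ord.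
Qed.

Lemma card_bottom : #|bottom| <= n * n.+1.
Proof.
have bottom_sub : bottom \subset (fun jk => @Bot n d jk.1 jk.2) @: setT.
  by apply/subsetP => x; rewrite inE; case: x => // j k _; apply/imsetP; exists (j, k).
by have := card_sub_imset bottom_sub; rewrite card_prod !card_ord.
Qed.

Lemma card_row p : #|row p| = n.+1.
Proof.
have -> : row p = @Bot n d p @: setT.
  apply/setP => x; rewrite inE; apply/idP/imsetP => [|[q _ ->]] //.
  by case: x => // j k /eqP ->; exists k.
by rewrite card_imset ?cardsT ?card_ord // => q q' [].
Qed.

Lemma card_row_offrow p : #|row p| + #|offrow p| = #|bottom|.
Proof.
rewrite -(cardsID (row p) bottom) (setIidPr _) //.
by apply/subsetP => x; rewrite !inE; case: x.
Qed.

Definition weight p (A : {set gvert n d}) : nat :=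
  #|A :&: row p| + 2 * #|A :&: offrow p| + #|A :&: mids| + #|A :&: tops|
  + (A \subset mids).

End Parts.

Arguments tops {n d}.
Arguments mids {n d}.
Arguments bottom {n d}.
Arguments row {n d}.
Arguments offrow {n d}.
Arguments weight {n d}.

Section Family.

Variables (n d : nat) (e : rel 'I_n) (I : finType) (S : I -> {set gvert n d}).
Hypothesis disjS : forall i j, i != j -> [disjoint S i & S j].
Hypothesis connS : forall i, induces_connected (@Gprime_adj n d e) (S i).
Hypothesis adjS : forall i j, i != j ->
  exists x, exists y, [/\ x \in S i, y \in S j & @Gprime_adj n d e x y].
Hypothesis card_I : n + d < #|I|.

Lemma sub_tops_of_no_mids i : S i :&: mids == set0 -> S i :&: tops != set0 ->
  S i \subset tops.
Proof.
move=> /eqP noMid /set0Pn[x /setIP[Six topx]]; case: (connS i) => _ connSi.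
have notMid y : y \in S i -> y \notin mids.
  by move=> Siy; apply: contraFN (in_set0 y) => midy; rewrite -noMid inE Siy.
apply/subsetP => y Siy; rewrite -(closed_connect _ (connSi x y Six Siy)) //.
move=> u v /and3P[uv /notMid + /notMid]; rewrite !inE.
by case: u uv => [?|?|? ?]; case: v.
Qed.

Lemma meets_mids_of_meets_tops i : S i :&: tops != set0 -> S i :&: mids != set0.
Proof.
move=> topi; apply/negP => /[dup] noMid /sub_tops_of_no_mids /(_ topi) Sitops.
have meets j : 0 < #|S j :&: (tops :|: mids)|.
  rewrite card_gt0; have [<-|ij] := eqVneq i j.
    by rewrite setIUr setU_eq0 negb_and topi.
  have [x [y [Six Sjy xy]]] := adjS ij; apply/set0Pn; exists y.
  move/subsetP/(_ x Six): Sitops xy; rewrite !inE Sjy.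
  by case: x {Six} => // ? _; case: y {Sjy}.
have : \sum_(j : I) 1 <= \sum_j #|S j :&: (tops :|: mids)|.
  by apply: leq_sum => j _; apply: meets.
move/leq_trans/(_ (sum_card_setI_disjoint _ disjS)).
rewrite sum1_card -[#|xpredT|]/#|I| => /leq_trans/(_ (leq_card_setU _ _).1).
by have := card_tops n d; have := card_mids n d; lia.
Qed.

Lemma mids_only_unique i j : S i \subset mids -> S j \subset mids -> i = j.
Proof.
move=> /subsetP Simids /subsetP Sjmids; apply/eqP; apply/negP => /negP ij.
have [x [y [Six Sjy]]] := adjS ij.
by move: (Simids x Six) (Sjmids y Sjy); rewrite !inE; case: x {Six} => // ?; case: y {Sjy}.
Qed.

Lemma meets_card_gt0 i (A : {set gvert n d}) x :
  x \in S i -> x \in A -> 0 < #|S i :&: A|.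
Proof. by move=> Six Ax; rewrite card_gt0; apply/set0Pn; exists x; rewrite inE Six. Qed.

Lemma weight_ge2 p i : (forall q, S i != [set Bot d p q]) -> 2 <= weight p (S i).
Proof.
move=> notSingle; rewrite /weight.
case: (boolP (S i :&: mids == set0)) => [noMid|/set0Pn[m /setIP[Sim midm]]].
  have noTop := contraTT (@meets_mids_of_meets_tops i) noMid.
  have Sibot : S i \subset bottom.
    apply/subsetP => x Six; move/eqP/setP/(_ x): noMid; move/eqP/setP/(_ x): noTop.
    by rewrite !inE Six; case: x {Six}.
  case: (boolP (S i :&: offrow p == set0)) => [noOff|]; last by rewrite -card_gt0; lia.
  have Sirow : S i \subset row p.
    apply/subsetP => x Six; move/eqP/setP/(_ x): noOff.
    by rewrite in_setI in_setD Six (subsetP Sibot x Six) andbT in_set0 => /negbFE.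
  have notOne : #|S i| != 1.
    apply/negP => /cards1P[x Sx]; have := subsetP Sirow x; rewrite Sx set11 inE.
    case: x Sx => [?|?|j q] Sx /(_ isT) // /eqP jp.
    by move: (notSingle q); rewrite Sx jp eqxx.
  have : 0 < #|S i| by rewrite card_gt0; case: (connS i).
  by rewrite (setIidPl Sirow); lia.
have := meets_card_gt0 Sim midm.
case: (boolP (S i \subset mids)) => [_|/subsetPn[x Six notMid]] /=; first by lia.
case: x Six notMid => [t|?|j k] Six; rewrite inE //= => _.
  by have := meets_card_gt0 (A := tops) Six; rewrite inE /=; lia.
case: (eqVneq j p) => [jp|jNp].
  by have := meets_card_gt0 (A := row p) Six; rewrite inE /= jp eqxx; lia.
by have := meets_card_gt0 (A := offrow p) Six; rewrite !inE /= jNp; lia.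
Qed.

Lemma sum_weight_le p : \sum_i weight p (S i) <= 2 * (n * n.+1) + d.
Proof.
rewrite /weight 4!big_split -big_distrr /=.
set R := \sum_i #|S i :&: row p|; set O := \sum_i #|S i :&: offrow p|.
set M := \sum_i #|S i :&: mids|; set T := \sum_i #|S i :&: tops|.
set B := \sum_i nat_of_bool _.
have R_le : R <= #|row p| := sum_card_setI_disjoint _ disjS.
have O_le : O <= #|offrow p| := sum_card_setI_disjoint _ disjS.
have M_le : M <= #|mids| := sum_card_setI_disjoint _ disjS.
have T_le : T <= #|tops| := sum_card_setI_disjoint _ disjS.
have B_le : B <= 1.
  have -> : B = #|[set i | S i \subset mids]|.
    by rewrite -sum1dep_card [RHS]big_mkcond; apply: eq_bigr => i _; case: ifP.
  by apply/card_le1_eqP => i j; rewrite !inE => Si Sj; rewrite (mids_only_unique Si Sj).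
have := @card_row n d p; have := @card_row_offrow n d p.
have := card_bottom n d; have := card_mids n d; have := card_tops n d.
lia.
Qed.

Lemma exists_row_singleton p :
  2 * (n * n.+1) + d < 2 * #|I| -> exists q i, S i = [set Bot d p q].
Proof.
move=> cardI.
have [/existsP[q /existsP[i /eqP Si]] | none] :=
  boolP [exists q, exists i, S i == [set Bot d p q]]; first by exists q, i.
have weight2 i : 2 <= weight p (S i).
  apply: weight_ge2 => q; apply: contraNneq none => Si.
  by apply/existsP; exists q; apply/existsP; exists i; rewrite Si.
have : \sum_(i : I) 2 <= \sum_i weight p (S i) by apply: leq_sum => i _.
by rewrite sum_nat_const -[#|xpredT|]/#|I|; have := sum_weight_le p; lia.
Qed.

End Family.

Theorem lemma4 (n d : nat) (e : rel 'I_n) :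
  0 < n -> simple_graph e ->
  (forall v : 'I_n, exists u : 'I_n, u != v /\ ~~ e v u) ->
  0 < d ->
  forall S : 'I_(n * n.+1 + d) -> {set gvert n d},
  (forall i j, i != j -> [disjoint S i & S j]) ->
  (forall i, induces_connected (@Gprime_adj n d e) (S i)) ->
  (forall i j, i != j ->
     exists x, exists y, [/\ x \in S i, y \in S j & @Gprime_adj n d e x y]) ->
  forall p : 'I_n, exists q : 'I_n.+1, exists i, S i = [set @Bot n d p q].
Proof.
move=> n_gt0 _ _ d_gt0 S disjS connS adjS p.
have n_lt : n < n * n.+1 by rewrite -{1}[n]muln1 ltn_pmul2l.
by apply: (exists_row_singleton disjS connS adjS); rewrite card_ord; lia.
Qed.
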